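(* Let $Q$ be a finite loop with the antiautomorphic inverse property and let $S$ be a subloop of $Q$. Let \[ \mathcal{L}(Q,S)=\Big\{\bigcap_{x\in X} xS : \emptyset\neq X\subseteq Q\Big\},\qquad \mathcal{R}(Q,S)=\Big\{\bigcap_{x\in X} Sx : \emptyset\neq X\subseteq Q\Big\}, \] each partially ordered by inclusion (they are meet-semilattices with meet given by intersection, in which the cosets are the maximal elements). Then the mapping $xS\mapsto Sx^{-1}$ (from left cosets to right cosets of $S$) is well-defined, and it extends uniquely to an isomorphism of meet-semilattices $\mathcal{L}(Q,S)\to\mathcal{R}(Q,S)$.
   Context: A loop $Q$ has the antiautomorphic inverse property if for every $x\in Q$ there is $x^{-1}\in Q$ with $xx^{-1}=1=x^{-1}x$, and $(xy)^{-1}=y^{-1}x^{-1}$ for all $x,y\in Q$. For a subloop $S\le Q$ and $x\in Q$, $xS=\{xs:s\in S\}$ and $Sx=\{sx:s\in S\}$. An isomorphism of meet-semilattices is a bijection $g$ with $g(a\wedge b)=g(a)\wedge g(b)$. *)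

From mathcomp Require Import all_boot.
Set Implicit Arguments. Unset Strict Implicit. Unset Printing Implicit Defensive.

Definition is_loop (T : finType) (mul : T -> T -> T) (e : T) : Prop :=
  (forall x, mul e x = x /\ mul x e = x) /\
  (forall a, bijective (mul a)) /\
  (forall a, bijective (fun y => mul y a)).

Definition aaip (T : finType) (mul : T -> T -> T) (e : T) (inv : T -> T) : Prop :=
  (forall x, mul x (inv x) = e /\ mul (inv x) x = e) /\
  (forall x y, inv (mul x y) = mul (inv y) (inv x)).

Definition is_subloop (T : finType) (mul : T -> T -> T) (e : T) (S : {set T}) : Prop :=
  e \in S /\
  (forall a b, a \in S -> b \in S -> mul a b \in S) /\
  (forall a b x, a \in S -> b \in S -> mul a x = b -> x \in S) /\
  (forall a b y, a \in S -> b \in S -> mul y a = b -> y \in S).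

Definition lcoset (T : finType) (mul : T -> T -> T) (x : T) (S : {set T}) : {set T} :=
  [set mul x s | s in S].
Definition rcoset (T : finType) (mul : T -> T -> T) (S : {set T}) (x : T) : {set T} :=
  [set mul s x | s in S].

Definition Lsl (T : finType) (mul : T -> T -> T) (S : {set T}) : {set {set T}} :=
  [set A : {set T} | [exists X : {set T},
     (X != set0) && (A == \bigcap_(x in X) lcoset mul x S)]].
Definition Rsl (T : finType) (mul : T -> T -> T) (S : {set T}) : {set {set T}} :=
  [set A : {set T} | [exists X : {set T},
     (X != set0) && (A == \bigcap_(x in X) rcoset mul S x)]].

Definition meet_iso (T : finType) (L R : {set {set T}}) (g : {set T} -> {set T}) : Prop :=
  (forall A, A \in L -> g A \in R) /\
  {in L &, injective g} /\
  (forall B, B \in R -> exists2 A, A \in L & g A = B) /\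
  (forall A B, A \in L -> B \in L -> g (A :&: B) = g A :&: g B).

From mathcomp Require Import all_boot.

Set Implicit Arguments.
Unset Strict Implicit.
Unset Printing Implicit Defensive.

(* With the antiautomorphic inverse property, inversion is an involution that
   reverses products, so its preimage map carries xS onto S x^-1.  Preimages
   commute with intersections, hence A |-> inv^-1(A) maps every intersection
   of left cosets to the corresponding intersection of right cosets, and it is
   its own inverse.  Uniqueness holds because every element of L(Q,S) is a
   finite intersection of cosets, on which a meet-morphism is determined. *)

Lemma preimsetK (T : finType) (f : T -> T) (A : {set T}) :
  involutive f -> f @^-1: (f @^-1: A) = A.
Proof. by move=> fK; apply/setP => z; rewrite !inE fK. Qed.

Lemma preimset_bigcap (aT rT I : finType) (f : aT -> rT) (X : {set I})
    (F : I -> {set rT}) :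
  f @^-1: (\bigcap_(i in X) F i) = \bigcap_(i in X) f @^-1: F i.
Proof. exact: (big_morph _ (@preimsetI _ _ f) (preimsetT f)). Qed.

Section Cosets.

Variables (T : finType) (mul : T -> T -> T) (S : {set T}).

Lemma mem_Lsl X :
  X != set0 -> \bigcap_(x in X) lcoset mul x S \in Lsl mul S.
Proof. by move=> X0; rewrite inE; apply/existsP; exists X; rewrite X0 eqxx. Qed.

Lemma mem_Rsl X :
  X != set0 -> \bigcap_(x in X) rcoset mul S x \in Rsl mul S.
Proof. by move=> X0; rewrite inE; apply/existsP; exists X; rewrite X0 eqxx. Qed.

Lemma meet_morph_bigcap_lcoset (h : {set T} -> {set T}) :
  {in Lsl mul S &, forall A B, h (A :&: B) = h A :&: h B} ->
  forall X : {set T}, X != set0 ->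
  h (\bigcap_(x in X) lcoset mul x S) = \bigcap_(x in X) h (lcoset mul x S).
Proof.
move=> hI X; have [n] := ubnP #|X|; elim: n X => // n IH X.
rewrite ltnS => leXn X0; have [x Xx] := set0Pn _ X0.
rewrite !(big_setD1 x Xx) /=.
have [->|X'0] := eqVneq (X :\ x) set0; first by rewrite !big_set0 !setIT.
have x_Lsl : lcoset mul x S \in Lsl mul S.
  have := @mem_Lsl [set x]; rewrite big_set1; apply.
  by rewrite -card_gt0 cards1.
rewrite hI ?mem_Lsl // IH //.
by move: leXn; rewrite (cardsD1 x) Xx.
Qed.

End Cosets.

Section AntiautomorphicInverse.

Variables (T : finType) (mul : T -> T -> T) (e : T) (inv : T -> T).
Hypothesis mul_linj : forall a, injective (mul a).
Hypothesis inv_aaip : aaip mul e inv.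

Lemma aaip_invK : involutive inv.
Proof.
have [mulV _] := inv_aaip.
by move=> x; apply: (@mul_linj (inv x)); rewrite (proj1 (mulV (inv x))) (proj2 (mulV x)).
Qed.

Lemma aaip_invM x y : inv (mul x y) = mul (inv y) (inv x).
Proof. exact: inv_aaip.2. Qed.

Lemma subloop_inv (S : {set T}) s :
  is_subloop mul e S -> s \in S -> inv s \in S.
Proof.
move=> [eS [_ [S_ldiv _]]] sS.
exact: (S_ldiv s e (inv s) sS eS (proj1 (inv_aaip.1 s))).
Qed.

Variable S : {set T}.
Hypothesis S_subloop : is_subloop mul e S.

Lemma preim_inv_lcoset x : inv @^-1: lcoset mul x S = rcoset mul S (inv x).
Proof.
apply/setP => z; rewrite !inE.
apply/imsetP/imsetP => [[s sS zE]|[s sS ->]]; exists (inv s);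
  rewrite ?subloop_inv //.
  by rewrite -aaip_invM -zE aaip_invK.
by rewrite aaip_invM aaip_invK.
Qed.

Lemma preim_inv_rcoset y : inv @^-1: rcoset mul S y = lcoset mul (inv y) S.
Proof.
apply/setP => z; rewrite -[y]aaip_invK -preim_inv_lcoset !inE.
by rewrite !aaip_invK.
Qed.

Lemma preim_inv_Lsl A : A \in Lsl mul S -> inv @^-1: A \in Rsl mul S.
Proof.
rewrite inE => /existsP[X /andP[X0 /eqP->]].
rewrite preimset_bigcap (eq_bigr _ (fun x _ => preim_inv_lcoset x)).
rewrite -(big_imset (rcoset mul S) (in2W (can_inj aaip_invK))) /=.
by rewrite mem_Rsl // imset_eq0.
Qed.

Lemma preim_inv_Rsl B : B \in Rsl mul S -> inv @^-1: B \in Lsl mul S.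
Proof.
rewrite inE => /existsP[Y /andP[Y0 /eqP->]].
rewrite preimset_bigcap (eq_bigr _ (fun y _ => preim_inv_rcoset y)).
rewrite -(big_imset (lcoset mul ^~ S) (in2W (can_inj aaip_invK))) /=.
by rewrite mem_Lsl // imset_eq0.
Qed.

End AntiautomorphicInverse.

Theorem proposition3p3 (T : finType) (mul : T -> T -> T) (e : T) (inv : T -> T)
  (S : {set T}) :
  is_loop mul e -> aaip mul e inv -> is_subloop mul e S ->
  (forall x y, lcoset mul x S = lcoset mul y S ->
               rcoset mul S (inv x) = rcoset mul S (inv y)) /\
  (exists g : {set T} -> {set T},
     meet_iso (Lsl mul S) (Rsl mul S) g /\
     (forall x, g (lcoset mul x S) = rcoset mul S (inv x)) /\
     (forall g' : {set T} -> {set T},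
        meet_iso (Lsl mul S) (Rsl mul S) g' ->
        (forall x, g' (lcoset mul x S) = rcoset mul S (inv x)) ->
        {in Lsl mul S, g' =1 g})).
Proof.
move=> [_ [mul_bij _]] inv_aaip S_subloop.
have mul_linj a : injective (mul a) := bij_inj (mul_bij a).
have invK := aaip_invK mul_linj inv_aaip.
have gx := preim_inv_lcoset mul_linj inv_aaip S_subloop.
split=> [x y xSE|]; first by rewrite -!gx xSE.
exists (fun A : {set T} => inv @^-1: A); split; last split=> //.
  split; first exact: (preim_inv_Lsl mul_linj inv_aaip S_subloop).
  split; first by move=> A B _ _ AB; rewrite -[A](preimsetK _ invK) AB preimsetK.
  split=> [B B_Rsl|A B _ _]; last exact: preimsetI.
  exists (inv @^-1: B); first exact: (preim_inv_Rsl mul_linj inv_aaip S_subloop).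
  exact: preimsetK.
move=> g' [_ [_ [_ g'I]]] g'x A; rewrite inE => /existsP[X /andP[X0 /eqP->]].
rewrite (meet_morph_bigcap_lcoset g'I) // preimset_bigcap.
by apply: eq_bigr => x _; rewrite g'x gx.
Qed.
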